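(* Let $\|\cdot\|$ be a norm on $\mathbb{R}^{m\times d}$, $C$, $L_X(D)$, $C_X(D)$ as below, $X\in\mathbb{R}^{m\times n}$, and $\mathfrak{D}\subset\mathbb{R}^{m\times d}$. Suppose there are finite constants $L_X(\mathfrak{D})>0$ and $C_X(\mathfrak{D})\ge0$ with $\sup_{D\in\mathfrak{D}}L_X(D)\le L_X(\mathfrak{D})$ and $\sup_{D\in\mathfrak{D}}C_X(D)\le C_X(\mathfrak{D})$. Then for all $D\neq D'\in\mathfrak{D}$, $$\frac{|F_X(D')-F_X(D)|}{\|D'-D\|}\le L_X(\mathfrak{D})\Big(1+\frac{C_X(\mathfrak{D})}{L_X(\mathfrak{D})}\|D'-D\|\Big).$$
   Context: A penalty is a function $g:\mathbb{R}^d\to\mathbb{R}\cup\{+\infty\}$ with $g\ge0$, not identically $+\infty$. $\mathcal{L}_x(D,\alpha)=\tfrac12\|x-D\alpha\|_2^2+g(\alpha)$, $f_x(D)=\inf_\alpha\mathcal{L}_x(D,\alpha)$, $F_X(D)=\frac1n\sum_i f_{x_i}(D)$ for $X=[x_1,\dots,x_n]$. $\|\Delta\|_{1\to2}=\max_j\|\delta_j\|_2$. $\|\cdot\|_\star$ is the dual norm of $\|\cdot\|$ w.r.t. the Frobenius inner product, and $C>0$ is a constant with $\|\Delta\|_{1\to2}^2\le C\|\Delta\|^2$ for all $\Delta$. For $\epsilon>0$, $\mathfrak{A}_\epsilon(X,D)=\{A=[\alpha_1,\dots,\alpha_n]:\ \mathcal{L}_{x_i}(D,\alpha_i)\le f_{x_i}(D)+\epsilon\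 \forall i\}$; $L_X(D)=\inf_{\epsilon>0}\sup_{A\in\mathfrak{A}_\epsilon(X,D)}\frac1n\|(X-DA)A^\top\|_\star$ and $C_X(D)=\inf_{\epsilon>0}\sup_{A\in\mathfrak{A}_\epsilon(X,D)}\frac{C}{2n}\sum_i\|\alpha_i\|_1^2$. *)

From Stdlib Require Import Reals ClassicalEpsilon.
From mathcomp Require Import ssreflect ssrbool ssrfun eqtype ssrnat fintype bigop.
Open Scope R_scope.

Inductive Rbar := RFin (r : R) | p_infty | m_infty.

Definition Rbar_le (x y : Rbar) : Prop :=
  match x, y with
  | m_infty, _ => True
  | _, p_infty => True
  | RFin a, RFin b => a <= b
  | _, _ => False
  end.

Definition Rbar_plus_r (r : R) (y : Rbar) : Rbar :=
  match y with
  | RFin b => RFin (r + b)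
  | p_infty => p_infty
  | m_infty => m_infty
  end.

(* real part (used only on quantities that are finite) *)
Definition rb2r (x : Rbar) : R := match x with RFin r => r | _ => 0 end.

Definition is_lub_Rbar (E : Rbar -> Prop) (s : Rbar) : Prop :=
  (forall x, E x -> Rbar_le x s) /\
  (forall b, (forall x, E x -> Rbar_le x b) -> Rbar_le s b).
Definition is_glb_Rbar (E : Rbar -> Prop) (s : Rbar) : Prop :=
  (forall x, E x -> Rbar_le s x) /\
  (forall b, (forall x, E x -> Rbar_le b x) -> Rbar_le b s).

(* supremum / infimum in [-oo,+oo] (they always exist) *)
Definition Rbar_sup (E : Rbar -> Prop) : Rbar :=
  epsilon (inhabits m_infty) (is_lub_Rbar E).
Definition Rbar_inf (E : Rbar -> Prop) : Rbar :=
  epsilon (inhabits p_infty) (is_glb_Rbar E).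

Definition vec (k : nat) := 'I_k -> R.
Definition mat (p q : nat) := 'I_p -> 'I_q -> R.

Definition rsum {k : nat} (f : 'I_k -> R) : R := \big[Rplus/0]_(i < k) f i.

Definition mxmul {p q r : nat} (A : mat p q) (B : mat q r) : mat p r :=
  fun i j => rsum (fun l => A i l * B l j).
Definition mxsub {p q : nat} (A B : mat p q) : mat p q := fun i j => A i j - B i j.
Definition mxscale {p q : nat} (c : R) (A : mat p q) : mat p q := fun i j => c * A i j.
Definition mxadd {p q : nat} (A B : mat p q) : mat p q := fun i j => A i j + B i j.
Definition mxtr {p q : nat} (A : mat p q) : mat q p := fun i j => A j i.
Definition mxapp {p q : nat} (D : mat p q) (a : vec q) : vec p :=
  fun i => rsum (fun j => D i j * a j).
Definition vsub {k : nat} (u v : vec k) : vec k := fun i => u i - v i.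
Definition col {p q : nat} (A : mat p q) (j : 'I_q) : vec p := fun i => A i j.

Definition norm2sq {k : nat} (v : vec k) : R := rsum (fun i => v i ^ 2).
Definition norm1 {k : nat} (v : vec k) : R := rsum (fun i => Rabs (v i)).

Definition frob {p q : nat} (A B : mat p q) : R :=
  rsum (fun i => rsum (fun j => A i j * B i j)).

(* ||Delta||_{1->2} = max_j ||delta_j||_2  (0 if there are no columns) *)
Definition norm12 {p q : nat} (A : mat p q) : R :=
  \big[Rmax/0]_(j < q) sqrt (norm2sq (col A j)).

Record is_norm {p q : nat} (N : mat p q -> R) : Prop := {
  norm_nonneg : forall A, 0 <= N A;
  norm_definite : forall A, N A = 0 -> A = (fun _ _ => 0);
  norm_homog : forall c A, N (mxscale c A) = Rabs c * N A;
  norm_triangle : forall A B, N (mxadd A B) <= N A + N B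
}.

(* dual norm w.r.t. the Frobenius inner product (finite for a norm) *)
Definition dual_norm {p q : nat} (N : mat p q -> R) (M : mat p q) : R :=
  rb2r (Rbar_sup (fun v => exists Delta, N Delta <= 1 /\ v = RFin (frob M Delta))).

Section Obj.
Variables (m d : nat) (g : vec d -> Rbar).

Definition Lx (x : vec m) (D : mat m d) (a : vec d) : Rbar :=
  Rbar_plus_r (/ 2 * norm2sq (vsub x (mxapp D a))) (g a).

(* f_x(D) = inf_alpha L_x(D, alpha)  (finite under the penalty assumptions) *)
Definition fx (x : vec m) (D : mat m d) : R :=
  rb2r (Rbar_inf (fun v => exists a, v = Lx x D a)).

Variable n : nat.

Definition FX (X : mat m n) (D : mat m d) : R :=
  / INR n * rsum (fun i => fx (col X i) D).

Definition inA (eps : R) (X : mat m n) (D : mat m d) (A : mat d n) : Prop :=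
  forall i : 'I_n, Rbar_le (Lx (col X i) D (col A i)) (RFin (fx (col X i) D + eps)).

Definition LX (N : mat m d -> R) (X : mat m n) (D : mat m d) : Rbar :=
  Rbar_inf (fun v => exists eps, 0 < eps /\
    v = Rbar_sup (fun w => exists A, inA eps X D A /\
          w = RFin (/ INR n * dual_norm N (mxmul (mxsub X (mxmul D A)) (mxtr A))))).

Definition CX (C : R) (X : mat m n) (D : mat m d) : Rbar :=
  Rbar_inf (fun v => exists eps, 0 < eps /\
    v = Rbar_sup (fun w => exists A, inA eps X D A /\
          w = RFin (C / (2 * INR n) * rsum (fun i => norm1 (col A i) ^ 2)))).

End Obj.

(* Idea: fix eps > 0 and eps-minimisers alpha_i of L_{x_i}(D, .).  Since
   alpha_i is admissible for D', with Delta = D' - D and r_i = x_i - D alpha_i,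
       f_{x_i}(D') <= f_{x_i}(D) + eps - <r_i, Delta alpha_i>
                      + 1/2 ||Delta||_{1->2}^2 ||alpha_i||_1^2.
   Averaging over i, the linear terms add up to -<(X - DA)A^T, Delta>_F, which
   the dual norm bounds by ||(X - DA)A^T||_* ||Delta||, and the quadratic terms
   are controlled through ||Delta||_{1->2}^2 <= C ||Delta||^2.  Choosing eps
   small makes the sup over eps-minimisers close to L_X(D) and C_X(D), which
   gives the one-sided bound up to an arbitrary slack; letting the slack go to
   zero and symmetrising in D, D' yields the theorem. *)

From HB Require Import structures.
From Stdlib Require Import Reals Lra Psatz ClassicalEpsilon Classical FunctionalExtensionality.
From mathcomp Require Import ssreflect ssrbool ssrfun eqtype ssrnat seq fintype bigop.
Open Scope R_scope.

Lemma Rplus_assoc_law : associative Rplus. Proof. by move=> *; ring. Qed.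
Lemma Rplus_comm_law : commutative Rplus. Proof. by move=> *; ring. Qed.
Lemma Rplus_0_l_law : left_id 0 Rplus. Proof. by move=> *; ring. Qed.
HB.instance Definition _ :=
  Monoid.isComLaw.Build R 0 Rplus Rplus_assoc_law Rplus_comm_law Rplus_0_l_law.

Lemma rsum_ext {k : nat} (f h : 'I_k -> R) : (forall i, f i = h i) -> rsum f = rsum h.
Proof. by move=> H; apply: eq_bigr => i _; apply: H. Qed.

Lemma rsum_add {k : nat} (f h : 'I_k -> R) : rsum (fun i => f i + h i) = rsum f + rsum h.
Proof. by rewrite /rsum big_split. Qed.

Lemma rsum_scale {k : nat} c (f : 'I_k -> R) : c * rsum f = rsum (fun i => c * f i).
Proof. by rewrite /rsum; elim/big_rec2: _ => [|i x y _ <-]; ring. Qed.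

Lemma rsum_scale_r {k : nat} c (f : 'I_k -> R) : rsum f * c = rsum (fun i => f i * c).
Proof. by rewrite Rmult_comm rsum_scale; apply: rsum_ext => i; ring. Qed.

Lemma rsum_le {k : nat} (f h : 'I_k -> R) : (forall i, f i <= h i) -> rsum f <= rsum h.
Proof.
move=> H; rewrite /rsum; elim/big_rec2: _ => [|i x y _ Hxy]; first lra.
exact: Rplus_le_compat.
Qed.

Lemma rsum_swap {k l : nat} (F : 'I_k -> 'I_l -> R) :
  rsum (fun i => rsum (fun j => F i j)) = rsum (fun j => rsum (fun i => F i j)).
Proof. exact: exchange_big. Qed.

Lemma rsum_const {k : nat} c : rsum (fun _ : 'I_k => c) = INR k * c.
Proof.
rewrite /rsum big_const_ord; elim: k => [|k IH] /=; first lra.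
by rewrite IH; case: k {IH} => [|k] /=; lra.
Qed.

Lemma rsum_nonneg {k : nat} (f : 'I_k -> R) : (forall i, 0 <= f i) -> 0 <= rsum f.
Proof. by move=> H; have := @rsum_le _ (fun _ => 0) f H; rewrite rsum_const; lra. Qed.

Lemma rsum_term {k : nat} (f : 'I_k -> R) i : (forall j, 0 <= f j) -> f i <= rsum f.
Proof.
move=> H; rewrite /rsum (bigD1 i) //=.
suff Hrest : 0 <= \big[Rplus/0]_(j < k | j != i) f j.
  by rewrite -{1}(Rplus_0_r (f i)); exact: Rplus_le_compat_l.
elim/big_ind: _ => //; [lra | move=> x y; lra].
Qed.

Lemma sq_rsum {k : nat} (a : 'I_k -> R) :
  (rsum a) ^ 2 = rsum (fun j => rsum (fun l => a j * a l)).
Proof. by rewrite /= Rmult_1_r rsum_scale_r; apply: rsum_ext => j; rewrite rsum_scale. Qed.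

Lemma Rbar_le_trans x y z : Rbar_le x y -> Rbar_le y z -> Rbar_le x z.
Proof. by case: x; case: y; case: z => //= *; lra. Qed.

Lemma Rbar_le_total x y : ~ Rbar_le x y -> Rbar_le y x.
Proof. by case: x; case: y => //= *; lra. Qed.

Lemma lub_exists (E : Rbar -> Prop) : exists s, is_lub_Rbar E s.
Proof.
case: (classic (E p_infty)) => Hp.
  by exists p_infty; split; [case | move=> b Hb; apply: Hb].
case: (classic (exists r, E (RFin r))) => [[r0 Hr0]|Hne]; last first.
  exists m_infty; split => // -[r||] Hr //=.
  by case: Hne; exists r.
case: (classic (bound (fun r => E (RFin r)))) => Hb.
  have [l [Hl1 Hl2]] := completeness _ Hb (ex_intro _ r0 Hr0).
  exists (RFin l); split; first by case => [r||] Hr //=; apply: Hl1.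
  case => [c||] Hc //=; last by have := Hc _ Hr0.
  by apply: Hl2 => r Hr; exact: (Hc _ Hr).
exists p_infty; split; first by case.
case => [c||] Hc //=; last by have := Hc _ Hr0.
by case: Hb; exists c => r Hr; exact: (Hc _ Hr).
Qed.

Definition Rbar_opp (x : Rbar) : Rbar :=
  match x with RFin r => RFin (- r) | p_infty => m_infty | m_infty => p_infty end.

Lemma Rbar_opp_le x y : Rbar_le (Rbar_opp x) (Rbar_opp y) <-> Rbar_le y x.
Proof. by case: x; case: y => //= *; split; lra. Qed.

Lemma Rbar_oppK x : Rbar_opp (Rbar_opp x) = x.
Proof. by case: x => //= r; rewrite Ropp_involutive. Qed.

(* Greatest lower bounds, obtained from least upper bounds of the negated set. *)
Lemma glb_exists (E : Rbar -> Prop) : exists s, is_glb_Rbar E s.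
Proof.
have [s [Hub Hleast]] := lub_exists (fun y => E (Rbar_opp y)).
exists (Rbar_opp s); split.
  by move=> x Hx; rewrite -{1}(Rbar_oppK x) Rbar_opp_le; apply: Hub; rewrite Rbar_oppK.
move=> b Hb; rewrite -(Rbar_oppK b) Rbar_opp_le; apply: Hleast => x Hx.
by rewrite -{1}(Rbar_oppK x) Rbar_opp_le; apply: Hb.
Qed.

Lemma sup_spec E : is_lub_Rbar E (Rbar_sup E).
Proof. by apply: epsilon_spec; exact: lub_exists. Qed.

Lemma inf_spec E : is_glb_Rbar E (Rbar_inf E).
Proof. by apply: epsilon_spec; exact: glb_exists. Qed.

Lemma sup_ub E x : E x -> Rbar_le x (Rbar_sup E).
Proof. by case: (sup_spec E) => H _; apply: H. Qed.

Lemma sup_least E b : (forall x, E x -> Rbar_le x b) -> Rbar_le (Rbar_sup E) b.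
Proof. by case: (sup_spec E) => _ H; apply: H. Qed.

Lemma inf_lb E x : E x -> Rbar_le (Rbar_inf E) x.
Proof. by case: (inf_spec E) => H _; apply: H. Qed.

Lemma inf_greatest E b : (forall x, E x -> Rbar_le b x) -> Rbar_le b (Rbar_inf E).
Proof. by case: (inf_spec E) => _ H; apply: H. Qed.

Lemma sup_finite E a B : E (RFin a) -> (forall x, E x -> Rbar_le x (RFin B)) ->
  Rbar_sup E = RFin (rb2r (Rbar_sup E)).
Proof.
by move=> Ha HB; have := sup_ub _ _ Ha; have := sup_least _ _ HB; case: (Rbar_sup E).
Qed.

Lemma inf_finite E a B : E (RFin a) -> (forall x, E x -> Rbar_le (RFin B) x) ->
  Rbar_inf E = RFin (rb2r (Rbar_inf E)).
Proof.
by move=> Ha HB; have := inf_lb _ _ Ha; have := inf_greatest _ _ HB; case: (Rbar_inf E).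
Qed.

Lemma inf_approx E c delta : 0 < delta -> Rbar_le (Rbar_inf E) (RFin c) ->
  exists x, E x /\ Rbar_le x (RFin (c + delta)).
Proof.
move=> Hd Hc; apply: NNPP => Hnone.
have : Rbar_le (RFin (c + delta)) (Rbar_inf E).
  apply: inf_greatest => x Hx; apply: Rbar_le_total => Hx'.
  by apply: Hnone; exists x.
by move=> H; have := Rbar_le_trans _ _ _ H Hc => /=; lra.
Qed.

(* The shape of L_X and C_X: an inf over eps > 0 of a sup over a family Q eps.
   If it is at most c, some eps makes every member of Q eps at most c + delta. *)
Lemma inf_sup_approx (T : Type) (Q : R -> T -> Prop) (h : T -> R) c delta :
  0 < delta ->
  Rbar_le (Rbar_inf (fun v => exists eps, 0 < eps /\
             v = Rbar_sup (fun w => exists A, Q eps A /\ w = RFin (h A)))) (RFin c) ->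
  exists eps, 0 < eps /\ forall A, Q eps A -> h A <= c + delta.
Proof.
move=> Hd Hc; have [_ [[eps [Heps ->]] Hsup]] := inf_approx _ _ _ Hd Hc.
exists eps; split => // A HA.
change (Rbar_le (RFin (h A)) (RFin (c + delta))).
apply: (Rbar_le_trans _ _ _ _ Hsup); apply: sup_ub.
by exists A.
Qed.

Lemma le_bigmax_seq (I : eqType) (F : I -> R) (j : I) (r : seq I) :
  j \in r -> F j <= \big[Rmax/0]_(i <- r) F i.
Proof.
elim: r => [|x r IH] //; rewrite in_cons big_cons => /orP [/eqP <-|Hr].
  exact: Rmax_l.
exact: Rle_trans (IH Hr) (Rmax_r _ _).
Qed.

Lemma col_le_norm12 {p q : nat} (A : mat p q) j : norm2sq (col A j) <= norm12 A ^ 2.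
Proof.
have Hj : sqrt (norm2sq (col A j)) <= norm12 A.
  by rewrite /norm12; apply: le_bigmax_seq; rewrite mem_index_enum.
have Hn : 0 <= norm2sq (col A j) by apply: rsum_nonneg => i; exact: pow2_ge_0.
have Hs := sqrt_pos (norm2sq (col A j)).
have Hsq := sqrt_sqrt _ Hn.
move: Hj Hs Hsq; set s := sqrt _ => Hj Hs Hsq /=; nra.
Qed.

Lemma entry_le_norm12 {p q : nat} (A : mat p q) i j : A i j ^ 2 <= norm12 A ^ 2.
Proof.
apply: Rle_trans (col_le_norm12 A j).
exact: (rsum_term (fun i => col A j i ^ 2) i (fun _ => pow2_ge_0 _)).
Qed.

Lemma prod_amgm x y u v : x * u * (y * v) <= Rabs x * Rabs y * ((u ^ 2 + v ^ 2) / 2).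
Proof.
have Hxy : x * u * (y * v) <= Rabs (x * y) * Rabs (u * v).
  by rewrite -Rabs_mult; apply: Rle_trans (Rle_abs _); right; ring.
have Huv : Rabs (u * v) <= (u ^ 2 + v ^ 2) / 2.
  rewrite Rabs_mult -(pow2_abs u) -(pow2_abs v).
  have := pow2_ge_0 (Rabs u - Rabs v); lra.
rewrite Rabs_mult in Hxy; apply: Rle_trans Hxy _.
by apply: Rmult_le_compat_l => //; apply: Rmult_le_pos; exact: Rabs_pos.
Qed.

(* ||Delta a||_2^2 <= ||Delta||_{1->2}^2 ||a||_1^2: expand the square and apply
   AM-GM to every pair of columns. *)
Lemma mxapp_bound {p q : nat} (Delta : mat p q) (a : vec q) :
  norm2sq (mxapp Delta a) <= norm12 Delta ^ 2 * norm1 a ^ 2.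
Proof.
rewrite /norm2sq /mxapp.
rewrite (rsum_ext _ (fun k => rsum (fun j => rsum (fun l =>
           Delta k j * a j * (Delta k l * a l))))); last by move=> k; rewrite sq_rsum.
apply: (Rle_trans _ (rsum (fun k => rsum (fun j => rsum (fun l =>
          Rabs (a j) * Rabs (a l) * ((Delta k j ^ 2 + Delta k l ^ 2) / 2)))))).
  apply: rsum_le => k; apply: rsum_le => j; apply: rsum_le => l.
  rewrite (_ : Delta k j * a j * (Delta k l * a l) = a j * Delta k j * (a l * Delta k l));
    [exact: prod_amgm | ring].
rewrite rsum_swap (rsum_ext _ (fun j => rsum (fun l => Rabs (a j) * Rabs (a l) / 2 *
          (norm2sq (col Delta j) + norm2sq (col Delta l))))); last first.
  move=> j; rewrite rsum_swap; apply: rsum_ext => l.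
  by rewrite /norm2sq /col -rsum_add rsum_scale; apply: rsum_ext => k; field.
rewrite /norm1 sq_rsum Rmult_comm rsum_scale_r.
apply: rsum_le => j; rewrite rsum_scale_r; apply: rsum_le => l.
have := col_le_norm12 Delta j; have := col_le_norm12 Delta l.
have := Rabs_pos (a j); have := Rabs_pos (a l).
have := Rmult_le_pos _ _ (Rabs_pos (a j)) (Rabs_pos (a l)); nra.
Qed.

Lemma mxapp_sub {p q : nat} (D' D : mat p q) (a : vec q) k :
  mxapp (mxsub D' D) a k = mxapp D' a k - mxapp D a k.
Proof.
rewrite /mxapp /mxsub.
rewrite (rsum_ext _ (fun j => D' k j * a j + (-1) * (D k j * a j))); last by move=> j; ring.
by rewrite rsum_add -rsum_scale; ring.
Qed.

Lemma norm2sq_nonneg {k : nat} (v : vec k) : 0 <= norm2sq v.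
Proof. by apply: rsum_nonneg => i; exact: pow2_ge_0. Qed.

Lemma norm2sq_sub k (u w : vec k) :
  norm2sq (vsub u w) = norm2sq u - 2 * rsum (fun i => u i * w i) + norm2sq w.
Proof.
rewrite /norm2sq /vsub (rsum_ext _ (fun i => (u i ^ 2 + (-2) * (u i * w i)) + w i ^ 2)).
  by rewrite !rsum_add -rsum_scale; ring.
by move=> i; ring.
Qed.

Lemma sum_residual_frob m d n (X : mat m n) (D Delta : mat m d) (A : mat d n) :
  rsum (fun i : 'I_n => rsum (fun k => vsub (col X i) (mxapp D (col A i)) k *
                                       mxapp Delta (col A i) k))
  = frob (mxmul (mxsub X (mxmul D A)) (mxtr A)) Delta.
Proof.
rewrite /frob /mxmul /mxsub /mxtr /vsub /mxapp /col.
rewrite (rsum_ext _ (fun i => rsum (fun k => rsum (fun j =>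
   (X k i - rsum (fun l => D k l * A l i)) * A j i * Delta k j)))); last first.
  by move=> i; apply: rsum_ext => k; rewrite rsum_scale; apply: rsum_ext => j; ring.
rewrite rsum_swap; apply: rsum_ext => k; rewrite rsum_swap; apply: rsum_ext => j.
by rewrite rsum_scale_r.
Qed.

Lemma frob_scale {p q : nat} (M Delta : mat p q) c :
  frob M (mxscale c Delta) = c * frob M Delta.
Proof.
rewrite /frob /mxscale rsum_scale; apply: rsum_ext => i; rewrite rsum_scale.
by apply: rsum_ext => j; ring.
Qed.

Lemma frob_zero {p q : nat} (M : mat p q) : frob M (fun _ _ => 0) = 0.
Proof.
rewrite (_ : (fun _ _ => 0) = mxscale 0 M) ?frob_scale; first ring.
by rewrite /mxscale; do 2 apply: functional_extensionality => ?; ring.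
Qed.

Section NormFacts.
Context {p q : nat} (N : mat p q -> R) (HN : is_norm N).

Lemma norm_zero : N (fun _ _ => 0) = 0.
Proof.
rewrite (_ : (fun _ _ => 0) = mxscale 0 (fun (_ : 'I_p) (_ : 'I_q) => 0)).
  by rewrite (norm_homog _ HN) Rabs_R0; ring.
by rewrite /mxscale; do 2 apply: functional_extensionality => ?; ring.
Qed.

Lemma norm_sub_sym (A B : mat p q) : N (mxsub A B) = N (mxsub B A).
Proof.
rewrite (_ : mxsub A B = mxscale (-1) (mxsub B A)).
  by rewrite (norm_homog _ HN) Rabs_Ropp Rabs_R1 Rmult_1_l.
by rewrite /mxsub /mxscale; do 2 apply: functional_extensionality => ?; ring.
Qed.

Lemma norm_sub_pos (A B : mat p q) : A <> B -> 0 < N (mxsub A B).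
Proof.
move=> Hne; case: (norm_nonneg _ HN (mxsub A B)) => // /esym /(norm_definite _ HN) Hz.
case: Hne; do 2 apply: functional_extensionality => ?.
by apply: Rminus_diag_uniq; exact: (f_equal (fun F => F _ _) Hz).
Qed.

(* The comparison
   ||.||_{1->2}^2 <= C ||.||^2 bounds the squared entries on the unit ball by |C|, so the
   supremum defining ||M||_* is finite and dominates the pairing on the ball. *)
Context (C : R) (HCN : forall Delta : mat p q, norm12 Delta ^ 2 <= C * N Delta ^ 2).

Lemma frob_le_dual_norm (M : mat p q) :
  forall Delta, N Delta <= 1 -> frob M Delta <= dual_norm N M.
Proof.
set E := fun v => exists Delta, N Delta <= 1 /\ v = RFin (frob M Delta).
have HE0 : E (RFin 0).
  by exists (fun _ _ => 0); rewrite norm_zero frob_zero; split => //; lra.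
have HEB : forall x, E x ->
    Rbar_le x (RFin (rsum (fun i => rsum (fun j => (M i j ^ 2 + Rabs C) / 2)))).
  move=> x [D0 [HD0 ->]] /=; apply: rsum_le => i; apply: rsum_le => j.
  have HN0 := norm_nonneg _ HN D0.
  have Hnorm12 : norm12 D0 ^ 2 <= Rabs C.
    have HN1 : 0 <= N D0 ^ 2 <= 1 by split; [exact: pow2_ge_0 | simpl; nra].
    have := HCN D0; have := Rle_abs C; have := Rabs_pos C.
    move: HN1; set s := N D0 ^ 2; nra.
  have := entry_le_norm12 D0 i j; have := pow2_ge_0 (M i j - D0 i j); nra.
move=> Delta HDelta.
have := sup_ub E (RFin (frob M Delta)) (ex_intro _ Delta (conj HDelta erefl)).
by rewrite /dual_norm -/E (sup_finite _ _ _ HE0 HEB).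
Qed.

Lemma dual_norm_bound (M Delta : mat p q) : frob M Delta <= dual_norm N M * N Delta.
Proof.
case: (norm_nonneg _ HN Delta) => HD; last first.
  rewrite -HD (norm_definite _ HN _ (esym HD)) frob_zero.
  have := frob_le_dual_norm M (fun _ _ => 0); rewrite norm_zero frob_zero; nra.
have Hinv : 0 < / N Delta by exact: Rinv_0_lt_compat.
have := frob_le_dual_norm M (mxscale (/ N Delta) Delta).
rewrite (norm_homog _ HN) frob_scale Rabs_right; last lra.
rewrite Rinv_l; last lra.
move=> /(_ (Rle_refl 1)) H; apply: (Rmult_le_reg_l (/ N Delta)) => //.
by apply: Rle_trans H _; right; field; lra.
Qed.

End NormFacts.

(* The sparse-coding cost.  The penalty g is nonnegative and somewhere finite,
   so each f_x(D) is a genuine real infimum. *)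
Section SparseCoding.
Context (m d : nat) (g : vec d -> Rbar).
Context (Hg0 : forall a, Rbar_le (RFin 0) (g a)) (Hg1 : exists a, g a <> p_infty).

Lemma Lx_nonneg x D a : Rbar_le (RFin 0) (Lx m d g x D a).
Proof.
rewrite /Lx; have := Hg0 a; have := norm2sq_nonneg (vsub x (mxapp D a)).
by case: (g a) => //= r; lra.
Qed.

Lemma fx_finite x D :
  Rbar_inf (fun v => exists a, v = Lx m d g x D a) = RFin (fx m d g x D).
Proof.
have [a0 Ha0] := Hg1; move: Ha0 (Hg0 a0).
case Hga0 : (g a0) => [r0||] // _ _.
apply: (inf_finite _ (/ 2 * norm2sq (vsub x (mxapp D a0)) + r0) 0).
  by exists a0; rewrite /Lx Hga0.
by move=> v [a ->]; apply: Lx_nonneg.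
Qed.

Lemma fx_le_Lx x D a : Rbar_le (RFin (fx m d g x D)) (Lx m d g x D a).
Proof. by rewrite -fx_finite; apply: inf_lb; exists a. Qed.

Lemma fx_near_minimizer x D eps : 0 < eps ->
  exists a, Rbar_le (Lx m d g x D a) (RFin (fx m d g x D + eps)).
Proof.
move=> Heps.
have Hle : Rbar_le (Rbar_inf (fun v => exists a, v = Lx m d g x D a)) (RFin (fx m d g x D)).
  by rewrite fx_finite /=; lra.
by have [_ [[a ->] Ha]] := inf_approx _ _ _ Heps Hle; exists a.
Qed.

Context (n : nat).

Lemma near_minimizers_exist eps X D : 0 < eps -> exists A, inA m d g n eps X D A.
Proof.
move=> Heps.
pose P i a := Rbar_le (Lx m d g (col X i) D a) (RFin (fx m d g (col X i) D + eps)).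
pose alpha i := epsilon (inhabits (fun _ : 'I_d => 0)) (P i).
exists (fun j i => alpha i j) => i.
by apply: (epsilon_spec _ (P i)); exact: fx_near_minimizer.
Qed.

Lemma inA_mono eps1 eps2 X D A :
  eps1 <= eps2 -> inA m d g n eps1 X D A -> inA m d g n eps2 X D A.
Proof. by move=> Heps HA i; apply: Rbar_le_trans (HA i) _ => /=; lra. Qed.

(* Per-sample descent: an eps-minimiser a for D is admissible for D', and
   expanding ||x - D'a||^2 = ||(x - Da) - (D'-D)a||^2 gives
     f_x(D') <= f_x(D) + eps - <x - Da, (D'-D)a> + 1/2 ||D'-D||_{1->2}^2 ||a||_1^2. *)
Lemma fx_descent x D D' a eps :
  Rbar_le (Lx m d g x D a) (RFin (fx m d g x D + eps)) ->
  fx m d g x D' <= fx m d g x D + eps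
     - rsum (fun k => vsub x (mxapp D a) k * mxapp (mxsub D' D) a k)
     + / 2 * (norm12 (mxsub D' D) ^ 2 * norm1 a ^ 2).
Proof.
move=> Hmin; have HD' := fx_le_Lx x D' a.
have Hexpand : norm2sq (vsub x (mxapp D' a)) =
    norm2sq (vsub (vsub x (mxapp D a)) (mxapp (mxsub D' D) a)).
  by rewrite /norm2sq; apply: rsum_ext => k; rewrite /vsub mxapp_sub; ring.
rewrite [X in _ = X]norm2sq_sub in Hexpand.
have Hquad := mxapp_bound (mxsub D' D) a.
move: Hmin HD' Hquad; rewrite /Lx Hexpand.
by have := Hg0 a; case: (g a) => //= r _; lra.
Qed.

End SparseCoding.

Section AveragedDescent.
Context (m d n : nat) (g : vec d -> Rbar).
Context (Hg0 : forall a, Rbar_le (RFin 0) (g a)) (Hg1 : exists a, g a <> p_infty).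
Context (X : mat m n) (D1 D2 : mat m d) (A : mat d n) (eps : R).
Context (HA : inA m d g n eps X D1 A).

Let G := mxmul (mxsub X (mxmul D1 A)) (mxtr A).
Let T := rsum (fun i => norm1 (col A i) ^ 2).
Let Delta := mxsub D2 D1.

Lemma sum_fx_descent :
  rsum (fun i => fx m d g (col X i) D2) <=
    rsum (fun i => fx m d g (col X i) D1) + INR n * eps - frob G Delta
    + / 2 * norm12 Delta ^ 2 * T.
Proof.
rewrite /G /T /Delta.
apply: Rle_trans (rsum_le _ _ (fun i => fx_descent m d g Hg0 Hg1 _ _ D2 _ _ (HA i))) _.
right; rewrite (rsum_ext _ (fun i => fx m d g (col X i) D1 + (eps + ((-1) *
   rsum (fun k => vsub (col X i) (mxapp D1 (col A i)) k * mxapp (mxsub D2 D1) (col A i) k)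
   + (/ 2 * norm12 (mxsub D2 D1) ^ 2) * norm1 (col A i) ^ 2)))); last by move=> i; ring.
rewrite !rsum_add rsum_const -!rsum_scale sum_residual_frob; ring.
Qed.

Context (N : mat m d -> R) (HN : is_norm N) (C : R).
Context (HCN : forall Delta : mat m d, norm12 Delta ^ 2 <= C * N Delta ^ 2).
Context (Hn : (0 < n)%nat).

Lemma FX_descent :
  FX m d g n X D2 - FX m d g n X D1 <=
    eps + / INR n * dual_norm N G * N Delta + C / (2 * INR n) * T * N Delta ^ 2.
Proof.
have Hsum := sum_fx_descent.
have Hlin : - frob G Delta <= dual_norm N G * N Delta.
  have := dual_norm_bound N HN C HCN G (mxscale (-1) Delta).
  by rewrite frob_scale (norm_homog _ HN) Rabs_Ropp Rabs_R1; lra.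
have Hquad : norm12 Delta ^ 2 <= C * N Delta ^ 2 := HCN Delta.
have HT : 0 <= T by apply: rsum_nonneg => i; exact: pow2_ge_0.
have Hnpos : 0 < INR n by apply: lt_0_INR; apply/ltP.
rewrite /FX -Rmult_minus_distr_l.
apply: (Rmult_le_reg_l (INR n)) => //.
rewrite -Rmult_assoc Rinv_r; last lra.
have -> : INR n * (eps + / INR n * dual_norm N G * N Delta
                   + C / (2 * INR n) * T * N Delta ^ 2)
        = INR n * eps + dual_norm N G * N Delta + / 2 * (C * N Delta ^ 2) * T.
  by field; lra.
have : / 2 * norm12 Delta ^ 2 * T <= / 2 * (C * N Delta ^ 2) * T.
  by apply: Rmult_le_compat_r => //; lra.
lra.
Qed.

End AveragedDescent.

Lemma slack_limit x L K a : 0 <= a ->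
  (forall delta, 0 < delta -> x <= delta + (L + delta) * a + (K + delta) * a ^ 2) ->
  x <= L * a + K * a ^ 2.
Proof.
move=> Ha H; apply: Rnot_lt_le => Hx.
have Hq : 0 < 1 + a + a ^ 2 by have := pow2_ge_0 a; lra.
set delta := (x - (L * a + K * a ^ 2)) / (2 * (1 + a + a ^ 2)).
have Hdelta : 0 < delta by apply: Rdiv_lt_0_compat; lra.
have := H delta Hdelta.
have -> : delta + (L + delta) * a + (K + delta) * a ^ 2
        = L * a + K * a ^ 2 + (x - (L * a + K * a ^ 2)) / 2.
  by rewrite /delta; field; lra.
lra.
Qed.

Section OneSided.
Context (m d n : nat) (Hn : (0 < n)%nat).
Context (N : mat m d -> R) (HN : is_norm N) (C : R).
Context (HCN : forall Delta : mat m d, norm12 Delta ^ 2 <= C * N Delta ^ 2).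
Context (g : vec d -> Rbar).
Context (Hg0 : forall a, Rbar_le (RFin 0) (g a)) (Hg1 : exists a, g a <> p_infty).
Context (X : mat m n) (D1 D2 : mat m d) (LD CD : R).
Context (HL : Rbar_le (LX m d g n N X D1) (RFin LD)).
Context (HC : Rbar_le (CX m d g n C X D1) (RFin CD)).

(* With slack delta: pick eps so small that every eps-minimiser A has its
   L- and C-quantities within delta of LD and CD, and apply FX_descent to one. *)
Lemma FX_one_sided_slack delta : 0 < delta ->
  FX m d g n X D2 - FX m d g n X D1 <=
    delta + (LD + delta) * N (mxsub D2 D1) + (CD + delta) * N (mxsub D2 D1) ^ 2.
Proof.
move=> Hd.
have [e1 [He1 HLA]] := inf_sup_approx _ (fun eps A => inA m d g n eps X D1 A)
  (fun A => / INR n * dual_norm N (mxmul (mxsub X (mxmul D1 A)) (mxtr A))) _ _ Hd HL.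
have [e2 [He2 HCA]] := inf_sup_approx _ (fun eps A => inA m d g n eps X D1 A)
  (fun A => C / (2 * INR n) * rsum (fun i => norm1 (col A i) ^ 2)) _ _ Hd HC.
set eps := Rmin (Rmin e1 e2) delta.
have Heps : 0 < eps by repeat apply: Rmin_pos.
have [A HA] := near_minimizers_exist m d g Hg0 Hg1 n eps X D1 Heps.
have HLA' := HLA A (inA_mono m d g n _ _ X D1 A
  (Rle_trans _ _ _ (Rmin_l _ _) (Rmin_l _ _)) HA).
have HCA' := HCA A (inA_mono m d g n _ _ X D1 A
  (Rle_trans _ _ _ (Rmin_l _ _) (Rmin_r _ _)) HA).
have Hdescent := FX_descent m d n g Hg0 Hg1 X D1 D2 A eps HA N HN C HCN Hn.
have Ha := norm_nonneg _ HN (mxsub D2 D1).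
have Hepsd : eps <= delta := Rmin_r _ _.
move: HLA' HCA' Hdescent; cbv beta.
set a := N (mxsub D2 D1); set lA := / INR n * _; set cA := C / (2 * INR n) * _.
move=> HlA HcA Hdescent.
have : lA * a <= (LD + delta) * a by exact: Rmult_le_compat_r.
have : cA * a ^ 2 <= (CD + delta) * a ^ 2 by apply: Rmult_le_compat_r => //; exact: pow2_ge_0.
lra.
Qed.

Lemma FX_one_sided :
  FX m d g n X D2 - FX m d g n X D1 <= LD * N (mxsub D2 D1) + CD * N (mxsub D2 D1) ^ 2.
Proof. apply: slack_limit; [exact: norm_nonneg | exact: FX_one_sided_slack]. Qed.

End OneSided.

Theorem mainTheorem4
  (m d n : nat) (Hn : (0 < n)%nat)
  (N : mat m d -> R) (HN : is_norm N)
  (C : R) (HC : 0 < C) (HCN : forall Delta : mat m d, norm12 Delta ^ 2 <= C * N Delta ^ 2)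
  (g : vec d -> Rbar) (Hg0 : forall a, Rbar_le (RFin 0) (g a))
  (Hg1 : exists a, g a <> p_infty)
  (X : mat m n) (Dset : mat m d -> Prop) (LD CD : R) (HLD : 0 < LD) (HCD : 0 <= CD)
  (HL : Rbar_le (Rbar_sup (fun v => exists D, Dset D /\ v = LX m d g n N X D)) (RFin LD))
  (HCc : Rbar_le (Rbar_sup (fun v => exists D, Dset D /\ v = CX m d g n C X D)) (RFin CD))
  (D D' : mat m d) (HD : Dset D) (HD' : Dset D') (Hne : D <> D') :
  Rabs (FX m d g n X D' - FX m d g n X D) / N (mxsub D' D)
    <= LD * (1 + CD / LD * N (mxsub D' D)).
Proof.
have HL0 D0 : Dset D0 -> Rbar_le (LX m d g n N X D0) (RFin LD).
  by move=> HD0; apply: Rbar_le_trans HL; apply: sup_ub; exists D0.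
have HC0 D0 : Dset D0 -> Rbar_le (CX m d g n C X D0) (RFin CD).
  by move=> HD0; apply: Rbar_le_trans HCc; apply: sup_ub; exists D0.
have Hup := FX_one_sided m d n Hn N HN C HCN g Hg0 Hg1 X D D' LD CD (HL0 D HD) (HC0 D HD).
have Hdown := FX_one_sided m d n Hn N HN C HCN g Hg0 Hg1 X D' D LD CD (HL0 D' HD') (HC0 D' HD').
rewrite norm_sub_sym // in Hdown.
have Ha := norm_sub_pos N HN D' D (not_eq_sym Hne).
move: Hup Hdown Ha; set a := N (mxsub D' D) => Hup Hdown Ha.
have Habs : Rabs (FX m d g n X D' - FX m d g n X D) <= LD * a + CD * a ^ 2.
  by apply: Rabs_le; lra.
have -> : LD * (1 + CD / LD * a) = (LD * a + CD * a ^ 2) / a by field; lra.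
by apply: Rmult_le_compat_r => //; left; exact: Rinv_0_lt_compat.
Qed.
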